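(* Let $a\ge1$ and let $M_0,M_1,\dots,M_{a-1}$ be twisted $I$-adically incremental matrices with entries in $\mathbb{Z}_q[\![\underline\pi]\!]$. Write $\det(I-sM_{a-1}\cdots M_1M_0)=\sum_{k\ge0}(-1)^kr_k(\underline\pi)s^k$. Then for every $k\ge0$, $$\mathrm{val}_I(r_k(\underline\pi))\ge\frac{ak(k-1)(p-1)}{2d},$$ and $$r_k(\underline\pi)\equiv\prod_{j=0}^{a-1}\det\big((M_j)_{mn}\big)_{0\le m,n\le k-1}\pmod{I^{\lceil\frac{ak(k-1)(p-1)+(p-1)}{2d}\rceil}}.$$
   Context: $p$ prime, $d$ a positive integer, $\mathbb{Z}_q$ the unramified extension of $\mathbb{Z}_p$ with residue field $\mathbb{F}_q$, $I=(\pi_1,\dots,\pi_\ell)\subseteq\mathbb{Z}_q[\![\pi_1,\dots,\pi_\ell]\!]$. Define $\mathrm{val}_I(x)=n$ if $x\in I^n\setminus I^{n+1}$ and $\mathrm{val}_I(0)=\infty$. Matrices have rows and columns indexed by $\mathbb{Z}_{\ge0}$. A matrix $(h_{mn})_{m,n\ge0}$ over $\mathbb{Z}_q[\![\underline\pi]\!]$ is twisted $I$-adically incremental if $\mathrm{val}_I(h_{mn})\ge\frac{mp-n}{d}$ for all $m,n\ge0$. Products of such infinite matrices and their characteristic power series $\det(I-sM)=\sum_k(-1)^ks^k\sum_{m_0<\dots<m_{k-1}}\det(M_{m_im_j})$ converge $I$-adically. *)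

From HB Require Import structures.
From mathcomp Require Import all_boot all_order all_algebra all_fingroup.
Set Implicit Arguments. Unset Strict Implicit. Unset Printing Implicit Defensive.
Import Order.TTheory GRing.Theory Num.Theory.
Local Open Scope ring_scope.

Definition mi (l : nat) := {ffun 'I_l -> nat}.
Definition mdeg (l : nat) (al : mi l) : nat := (\sum_(i < l) al i)%N.

(* Formal power series A[[pi_1,...,pi_l]] as coefficient functions. *)
Definition ps (A : comNzRingType) (l : nat) := mi l -> A.

Section PS.
Variables (A : comNzRingType) (l : nat).

Definition psone : ps A l := fun al => if mdeg al == 0%N then 1 else 0.
Definition psadd (f g : ps A l) : ps A l := fun al => f al + g al.
Definition pssub (f g : ps A l) : ps A l := fun al => f al - g al.

Definition psmul (f g : ps A l) : ps A l := fun al =>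
  \sum_(be : {ffun 'I_l -> 'I_(mdeg al).+1} | [forall i, (be i <= al i)%N])
     f [ffun i => nat_of_ord (be i)] * g [ffun i => (al i - be i)%N].

(* f \in I^n, I = (pi_1,...,pi_l): all monomials of f have total degree >= n. *)
Definition inIpow (n : nat) (f : ps A l) : Prop :=
  forall al, (mdeg al < n)%N -> f al = 0.

Definition valI_eq (f : ps A l) (n : nat) : Prop := inIpow n f /\ ~ inIpow n.+1 f.

(* val_I(f) >= c  (val_I(0) = oo >= c always). *)
Definition valI_ge (f : ps A l) (c : rat) : Prop :=
  forall n : nat, valI_eq f n -> c <= n%:R.

Definition ps_series_lim (F : nat -> ps A l) (S : ps A l) : Prop :=
  forall N : nat, exists K0 : nat, forall K : nat, (K0 <= K)%N ->
    inIpow N (pssub S (fun al => \sum_(k < K) F k al)).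

Definition infmx := nat -> nat -> ps A l.

Definition infmx1 : infmx := fun m n => if m == n then psone else (fun _ => 0).

Definition infmx_mul_is (M N P : infmx) : Prop :=
  forall m n, ps_series_lim (fun k => psmul (M m k) (N k n)) (P m n).

Fixpoint infmx_prod_is (a : nat) (M : nat -> infmx) (P : infmx) : Prop :=
  match a with
  | 0 => forall m n, P m n = infmx1 m n
  | a'.+1 => exists Q, infmx_prod_is a' M Q /\ infmx_mul_is (M a') Q P
  end.

Definition psdet (k : nat) (B : 'I_k -> 'I_k -> ps A l) : ps A l := fun al =>
  \sum_(s : 'S_k) (-1) ^+ s * (\big[psmul/psone]_(i < k) B i (s i)) al.

Definition twisted_incremental (p d : nat) (H : infmx) : Prop :=
  forall m n : nat, valI_ge (H m n) ((((m * p)%N)%:R - n%:R) / d%:R).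

Definition fredholm_coef_is (P : infmx) (k : nat) (r : ps A l) : Prop :=
  forall N : nat, exists K0 : nat, forall K : nat, (K0 <= K)%N ->
    inIpow N (pssub r (fun al =>
      \sum_(m : {ffun 'I_k -> 'I_K} |
              [forall i : 'I_k, forall j : 'I_k, (i < j)%N ==> (m i < m j)%N])
        psdet (fun i j => P (m i) (m j)) al)).

End PS.

From Pilot Require Import Defs.
From HB Require Import structures.
From mathcomp Require Import all_boot all_order all_algebra all_fingroup.
From mathcomp Require Import zify ring lra mpoly.
From Stdlib Require Import Classical.
Set Implicit Arguments. Unset Strict Implicit. Unset Printing Implicit Defensive.
Import Order.TTheory GRing.Theory Num.Theory.
Local Open Scope ring_scope.

(* Reducing modulo I^N turns the power series into polynomials of {mpoly A[l]}, where
   determinants and products of matrices are honest ring operations, and replaces the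
   infinite product M_(a-1) ... M_0 by a product of finite top-left corners.  By
   Cauchy--Binet, the minor with rows r and columns c of M * X is a sum over injective row
   selections g; the term of g has valuation at least (p |r| - |g|) / d plus the bound
   (p |g| - |c| + e) / d known for X, and |g| >= 0 + 1 + ... + (k - 1) = k (k - 1) / 2,
   with equality only for the leading block.  Induction on the number of factors thus gains
   (p - 1) k (k - 1) / (2 d) per factor, and shows that every term other than the product
   of the leading minors gains an extra (p - 1) / d. *)

(** * Index sums and Cauchy--Binet *)

Lemma leq_card_bounded_inj (T : finType) (D : {pred T}) (h : T -> nat) y :
  {in D &, injective h} -> {in D, forall x, h x < y}%N -> (#|D| <= y)%N.
Proof.
move=> h_inj h_lt; rewrite cardE -(size_map h) -[y](size_iota 0).
apply: uniq_leq_size => [|_ /mapP[x xD ->]].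
  by rewrite map_inj_in_uniq ?enum_uniq // => x1 x2; rewrite !mem_enum; apply: h_inj.
by rewrite mem_iota add0n h_lt // -mem_enum.
Qed.

Section InjectiveSum.
Variables (k : nat) (g : 'I_k -> nat).
Hypothesis g_inj : injective g.

Let rank i := #|[set j | (g j < g i)%N]|.

Let rank_lt i : (rank i < k)%N.
Proof.
rewrite -[k]card_ord; apply: proper_card; apply/properP; split; first exact: subset_predT.
by exists i; rewrite ?inE ?ltnn.
Qed.

Let rank_le i : (rank i <= g i)%N.
Proof.
apply: (leq_card_bounded_inj (h := g)) => [j1 j2 _ _ /g_inj // | j].
by rewrite inE.
Qed.

Let rank_mono i i' : (g i < g i')%N -> (rank i < rank i')%N.
Proof.
move=> lt_ii'; apply: proper_card; apply/properP; split.
  by apply/subsetP => j; rewrite !inE => /ltn_trans; apply.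
by exists i; rewrite !inE ?ltnn.
Qed.

Let rank_inj : injective (fun i => Ordinal (rank_lt i)).
Proof.
move=> i i' /(congr1 val) /= E.
by case: (ltngtP (g i) (g i')) => [/rank_mono|/rank_mono|/g_inj //]; rewrite E ltnn.
Qed.

(* Reindexing by the rank of [g i] among the values of [g] compares [g] with the identity. *)
Lemma leq_sum_ord_inj : (\sum_(i < k) i <= \sum_(i < k) g i)%N.
Proof. by rewrite (reindex_inj rank_inj) /=; apply: leq_sum => i _. Qed.

Lemma ltn_sum_ord_inj i0 : (k <= g i0)%N -> (\sum_(i < k) i < \sum_(i < k) g i)%N.
Proof.
move=> le_k_gi0; rewrite (reindex_inj rank_inj) /= (bigD1 i0) //= [X in (_ < X)%N](bigD1 i0) //=.
by rewrite -addSn leq_add ?(leq_trans (rank_lt i0)) //; apply: leq_sum => i _.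
Qed.

End InjectiveSum.

Lemma leq_ord_incr k (m : 'I_k -> nat) :
  (forall i j : 'I_k, (i < j)%N -> (m i < m j)%N) -> forall i : 'I_k, (i <= m i)%N.
Proof.
move=> m_incr [i lt_ik]; elim: i lt_ik => // i IHi lt_i1k.
exact: leq_ltn_trans (IHi (ltnW lt_i1k)) (m_incr (Ordinal (ltnW lt_i1k)) (Ordinal lt_i1k) _).
Qed.

Lemma ltn_sum_ord_incr k (m : 'I_k -> nat) i0 :
  (forall i j : 'I_k, (i < j)%N -> (m i < m j)%N) -> m i0 != i0 ->
  (\sum_(i < k) i < \sum_(i < k) m i)%N.
Proof.
move=> m_incr m_i0; have le_m := leq_ord_incr m_incr.
rewrite (bigD1 i0) //= [X in (_ < X)%N](bigD1 i0) //= -addSn.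
rewrite leq_add //; last exact: leq_sum.
by rewrite ltn_neqAle eq_sym m_i0 le_m.
Qed.

(* Cauchy--Binet, before grouping the row selections [g] by their image. *)
Lemma det_mulmx_rowsub (R : comNzRingType) k L (U : 'M[R]_(k, L)) (V : 'M[R]_(L, k)) :
  \det (U *m V) =
    \sum_(g : {ffun 'I_k -> 'I_L}) (\prod_i U i (g i)) * \det (mxsub g id V).
Proof.
transitivity (\sum_(s : 'S_k) \sum_(g : {ffun 'I_k -> 'I_L})
     (-1) ^+ s * \prod_i (U i (g i) * V (g i) (s i))).
  apply: eq_bigr => s _; rewrite -big_distrr /=; congr (_ * _).
  rewrite -(bigA_distr_bigA (fun i t => U i t * V t (s i))).
  by apply: eq_bigr => i _; rewrite mxE.
rewrite exchange_big; apply: eq_bigr => g _ /=; rewrite big_distrr /=.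
apply: eq_bigr => s _; rewrite big_split /= mulrCA.
by congr (_ * (_ * _)); apply: eq_bigr => i _; rewrite mxE.
Qed.

Lemma det_rowsub_noninj (R : comNzRingType) k L (g : 'I_k -> 'I_L) (V : 'M[R]_(L, k)) :
  ~~ injectiveb g -> \det (mxsub g id V) = 0.
Proof.
case/injectivePn => i1 [i2 ne_i12 eq_g].
by apply: (determinant_alternate ne_i12) => j; rewrite !mxE eq_g.
Qed.

Lemma sum_ord_double k : ((\sum_(i < k) i) * 2 = k * k.-1)%N.
Proof. by rewrite -(big_mkord xpredT id) bin2_sum -[in RHS](bin1 k.-1) mul_bin_diag mulnC. Qed.

Lemma ltn_divceil y D n : (0 < D)%N -> (n < (y + D.-1) %/ D)%N = (n * D < y)%N.
Proof. by move=> D_gt0; rewrite leq_divRL // mulSn; case: D D_gt0 => // D _; lia. Qed.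

(** * I-adic valuation of polynomials *)

Section Valuation.
Variables (A : comNzRingType) (l : nat).
Local Notation R := {mpoly A[l]}.

Definition mval_ge (x : R) (c : rat) := forall m, (mdeg m)%:R < c -> x@_m = 0.

Lemma mval_ge0 c : mval_ge 0 c.
Proof. by move=> m _; rewrite mcoeff0. Qed.

Lemma mval_ge_nonpos x c : c <= 0 -> mval_ge x c.
Proof. by move=> c_le0 m /lt_le_trans /(_ c_le0); rewrite ltNge ler0n. Qed.

Lemma mval_ge_le x c c' : mval_ge x c -> c' <= c -> mval_ge x c'.
Proof. by move=> x_ge le_c'c m lt_m; apply: x_ge; apply: lt_le_trans le_c'c. Qed.

Lemma mval_ge_nat x c N :
  (forall n, (n < N)%N -> n%:R < c) -> mval_ge x c -> mval_ge x N%:R.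
Proof. by move=> ltN x_ge m; rewrite ltr_nat => /ltN; apply: x_ge. Qed.

Lemma mval_geD x y c : mval_ge x c -> mval_ge y c -> mval_ge (x + y) c.
Proof. by move=> x_ge y_ge m lt_m; rewrite mcoeffD x_ge ?y_ge ?addr0. Qed.

Lemma mval_geN x c : mval_ge x c -> mval_ge (- x) c.
Proof. by move=> x_ge m lt_m; rewrite mcoeffN x_ge ?oppr0. Qed.

Lemma mval_ge_sum (I : Type) (r : seq I) (P : pred I) (F : I -> R) c :
  (forall i, P i -> mval_ge (F i) c) -> mval_ge (\sum_(i <- r | P i) F i) c.
Proof.
move=> F_ge; apply: (big_ind (mval_ge^~ c)) => //; first exact: mval_ge0.
by move=> x y; apply: mval_geD.
Qed.

Lemma mval_geM x y a b : mval_ge x a -> mval_ge y b -> mval_ge (x * y) (a + b).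
Proof.
move=> x_ge y_ge m lt_m; rewrite mcoeffM big1 // => -[m1 m2] /= /eqP m_eq.
rewrite m_eq mdegD natrD in lt_m.
have [lt_m1 | le_a] := ltP (mdeg m1)%:R a; first by rewrite x_ge ?mul0r.
by rewrite y_ge ?mulr0 //; lra.
Qed.

Lemma mval_geMl x y a : mval_ge x a -> mval_ge (x * y) a.
Proof. by move=> x_ge; rewrite -[a]addr0; apply: mval_geM x_ge (mval_ge_nonpos _ _). Qed.

Lemma mval_geMr x y b : mval_ge y b -> mval_ge (x * y) b.
Proof. by move=> y_ge; rewrite -[b]add0r; apply: mval_geM (mval_ge_nonpos _ _) y_ge. Qed.

Lemma mval_ge_prod (I : Type) (r : seq I) (P : pred I) (F : I -> R) (c : I -> rat) :
  (forall i, P i -> mval_ge (F i) (c i)) ->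
  mval_ge (\prod_(i <- r | P i) F i) (\sum_(i <- r | P i) c i).
Proof.
move=> F_ge; apply: (big_ind2 mval_ge) => //; first exact: mval_ge_nonpos.
by move=> *; apply: mval_geM.
Qed.

Lemma mval_ge_det n (B : 'M[R]_n) (row_wt col_wt : 'I_n -> rat) :
  (forall i j, mval_ge (B i j) (row_wt i - col_wt j)) ->
  mval_ge (\det B) (\sum_i row_wt i - \sum_i col_wt i).
Proof.
move=> B_ge; apply: mval_ge_sum => s _; apply: mval_geMr.
rewrite [X in _ - X](reindex_inj (@perm_inj _ s)) /= -sumrB.
exact: mval_ge_prod.
Qed.

Definition eqmodI N (x y : R) := mval_ge (x - y) N%:R.
End Valuation.

Notation "x = y %[modI N ]" := (eqmodI N x y) : ring_scope.

Section Congruence.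
Variables (A : comNzRingType) (l N : nat).
Local Notation R := {mpoly A[l]}.

Lemma eqmodI_refl (x : R) : x = x %[modI N].
Proof. by rewrite /eqmodI subrr; apply: mval_ge0. Qed.

Lemma eqmodI_sym (x y : R) : x = y %[modI N] -> y = x %[modI N].
Proof. by rewrite /eqmodI -opprB => /mval_geN; rewrite opprK. Qed.

Lemma eqmodI_trans (x y z : R) : x = y %[modI N] -> y = z %[modI N] -> x = z %[modI N].
Proof. by move=> xy yz; have := mval_geD xy yz; rewrite addrA subrK. Qed.

Lemma eqmodID (x x' y y' : R) : x = x' %[modI N] -> y = y' %[modI N] -> x + y = x' + y' %[modI N].
Proof. by move=> xx' yy'; rewrite /eqmodI opprD addrACA; apply: mval_geD. Qed.

Lemma eqmodIM (x x' y y' : R) : x = x' %[modI N] -> y = y' %[modI N] -> x * y = x' * y' %[modI N].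
Proof.
move=> xx' yy'; rewrite /eqmodI; have -> : x * y - x' * y' = (x - x') * y + x' * (y - y') by ring.
by apply: mval_geD; [apply: mval_geMl | apply: mval_geMr].
Qed.

Lemma eqmodI_sum (I : Type) (r : seq I) (P : pred I) (F G : I -> R) :
  (forall i, P i -> F i = G i %[modI N]) ->
  \sum_(i <- r | P i) F i = \sum_(i <- r | P i) G i %[modI N].
Proof.
by move=> FG; apply: (big_ind2 (eqmodI N)) => //; [apply: eqmodI_refl | apply: eqmodID].
Qed.

Lemma eqmodI_prod (I : Type) (r : seq I) (P : pred I) (F G : I -> R) :
  (forall i, P i -> F i = G i %[modI N]) ->
  \prod_(i <- r | P i) F i = \prod_(i <- r | P i) G i %[modI N].
Proof.
by move=> FG; apply: (big_ind2 (eqmodI N)) => //; [apply: eqmodI_refl | apply: eqmodIM].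
Qed.

Lemma eqmodI_det n (B C : 'M[R]_n) :
  (forall i j, B i j = C i j %[modI N]) -> \det B = \det C %[modI N].
Proof.
move=> BC; apply: eqmodI_sum => s _; apply: eqmodIM; first exact: eqmodI_refl.
exact: eqmodI_prod.
Qed.

End Congruence.

(** * Truncation of power series modulo I^N *)

Section Truncation.
Variables (A : comNzRingType) (l : nat).
Local Notation R := {mpoly A[l]}.
Implicit Types (f g : ps A l) (m : 'X_{1..l}).

Definition mi_of_mnm m : mi l := [ffun i => m i].
Definition mnm_of_mi (al : mi l) : 'X_{1..l} := [multinom al i | i < l].

Lemma mnm_of_miK : cancel mnm_of_mi mi_of_mnm.
Proof. by move=> al; apply/ffunP => i; rewrite ffunE mnmE. Qed.

Lemma mdeg_mi_of_mnm m : Defs.mdeg (mi_of_mnm m) = mdeg m.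
Proof. by rewrite mdegE; apply: eq_bigr => i _; rewrite ffunE. Qed.

Lemma mdeg_mnm_of_mi al : mdeg (mnm_of_mi al) = Defs.mdeg al.
Proof. by rewrite -{2}(mnm_of_miK al) mdeg_mi_of_mnm. Qed.

Lemma psmulE f g m :
  psmul f g (mi_of_mnm m) = \sum_(k : 'X_{1..l < (mdeg m).+1} | (k <= m)%MM)
                              f (mi_of_mnm k) * g (mi_of_mnm (m - k)).
Proof.
rewrite /psmul mdeg_mi_of_mnm; set D := mdeg m.
pose h (k : 'X_{1..l < D.+1}) : {ffun 'I_l -> 'I_D.+1} := [ffun i => inord (k i)].
pose h' (be : {ffun 'I_l -> 'I_D.+1}) : 'X_{1..l < D.+1} :=
  insubd bm0 [multinom (be i : nat) | i < l].
have hE (k : 'X_{1..l < D.+1}) i : (inord (k i) : 'I_D.+1) = k i :> nat.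
  rewrite inordK // (leq_trans _ (bmdeg k)) // ltnS mdegE.
  by rewrite (bigD1 i) //= leq_addr.
rewrite (reindex_onto h h') => [|be /forallP be_le]; last first.
  apply/ffunP => i; rewrite ffunE val_insubd ifT ?mnmE ?inord_val //.
  rewrite ltnS mdegE (leq_trans _ (eq_leq (esym (mdegE m)))) //.
  by apply: leq_sum => j _; rewrite mnmE; have := be_le j; rewrite ffunE.
apply: eq_big => [k | k _].
  have -> : h' (h k) == k.
    by apply/eqP/val_inj; rewrite val_insubd (_ : [multinom _ | i < l] = k) ?bmdeg //;
      apply/mnmP => i; rewrite mnmE ffunE hE.
  by rewrite andbT; apply/forallP/mnm_lepP => le_km i; have := le_km i; rewrite !ffunE hE.
by congr (f _ * g _); apply/ffunP => i; rewrite !ffunE ?mnmBE hE.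
Qed.

Definition ps_trunc N f : R := \sum_(m : 'X_{1..l < N}) f (mi_of_mnm m) *: 'X_[m].

Lemma mcoeff_ps_trunc N f m :
  (ps_trunc N f)@_m = if (mdeg m < N)%N then f (mi_of_mnm m) else 0.
Proof.
rewrite /ps_trunc raddf_sum /=.
under eq_bigr => k _ do rewrite mcoeffZ mcoeffX.
case: ifPn => [lt_mN | ge_mN].
  rewrite (bigD1 (BMultinom lt_mN)) //= eqxx mulr1 big1 ?addr0 // => k ne_km.
  case: eqP => [k_m|]; last by rewrite mulr0.
  by move: ne_km; rewrite -(inj_eq val_inj) /= k_m eqxx.
rewrite big1 // => k _; case: eqP => [k_m|]; last by rewrite mulr0.
by have := bmdeg k; rewrite k_m (negbTE ge_mN).
Qed.

Lemma ps_trunc0 N : ps_trunc N (fun=> 0) = 0.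
Proof. by apply/mpolyP => m; rewrite mcoeff_ps_trunc mcoeff0 if_same. Qed.

Lemma ps_trunc_sub N f g : ps_trunc N (pssub f g) = ps_trunc N f - ps_trunc N g.
Proof. by apply/mpolyP => m; rewrite mcoeffB !mcoeff_ps_trunc; case: ifP; rewrite ?subrr. Qed.

Lemma ps_trunc_sum N (I : Type) (r : seq I) (P : pred I) (F : I -> ps A l) :
  ps_trunc N (fun al => \sum_(i <- r | P i) F i al) = \sum_(i <- r | P i) ps_trunc N (F i).
Proof.
apply/mpolyP => m; rewrite mcoeff_ps_trunc raddf_sum /=.
under [RHS]eq_bigr => i _ do rewrite mcoeff_ps_trunc.
by case: ifP => _ //; rewrite big1.
Qed.

Lemma ps_trunc_scale N c f : ps_trunc N (fun al => c * f al) = c *: ps_trunc N f.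
Proof. by apply/mpolyP => m; rewrite mcoeffZ !mcoeff_ps_trunc; case: ifP; rewrite ?mulr0. Qed.

Lemma ps_trunc_psone N : ps_trunc N (@psone A l) = 1 %[modI N].
Proof.
move=> m; rewrite ltr_nat => lt_mN.
rewrite mcoeffB mcoeff_ps_trunc lt_mN mcoeff1 /psone mdeg_mi_of_mnm mdeg_eq0.
by case: eqP; rewrite subrr.
Qed.

Lemma ps_trunc_psmul N f g : ps_trunc N (psmul f g) = ps_trunc N f * ps_trunc N g %[modI N].
Proof.
move=> m; rewrite ltr_nat => lt_mN.
rewrite mcoeffB mcoeff_ps_trunc lt_mN psmulE (mcoeff_poly_mul_lin _ _ (ltnSn _)) -sumrB.
rewrite big1 // => k le_km; have lt_kN := leq_trans (bmdeg k) lt_mN.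
by rewrite !mcoeff_ps_trunc lt_kN (leq_ltn_trans (mdegB _ _) lt_mN) subrr.
Qed.

Lemma ps_trunc_bigmul N k (F : 'I_k -> ps A l) :
  ps_trunc N (\big[@psmul A l/@psone A l]_(i < k) F i) = \prod_(i < k) ps_trunc N (F i) %[modI N].
Proof.
apply: (big_ind2 (fun f x => ps_trunc N f = x %[modI N])); first exact: ps_trunc_psone.
  move=> f1 x1 f2 x2 fx1 fx2.
  exact: eqmodI_trans (ps_trunc_psmul f1 f2) (eqmodIM fx1 fx2).
by move=> i _; apply: eqmodI_refl.
Qed.

Lemma ps_trunc_psdet N k (B : 'I_k -> 'I_k -> ps A l) :
  ps_trunc N (psdet B) = \det (\matrix_(i, j) ps_trunc N (B i j)) %[modI N].
Proof.
rewrite /psdet ps_trunc_sum; apply: eqmodI_sum => s _.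
rewrite ps_trunc_scale -mul_mpolyC rmorph_sign; apply: eqmodIM; first exact: eqmodI_refl.
under [X in _ = X %[modI N]]eq_bigr => i _ do rewrite mxE.
exact: ps_trunc_bigmul.
Qed.

Lemma inIpow_ps_truncP N n f :
  (n <= N)%N -> inIpow n f <-> mval_ge (ps_trunc N f) n%:R.
Proof.
move=> le_nN; split => [f_in m | f_ge al lt_al].
  rewrite ltr_nat mcoeff_ps_trunc => lt_mn; rewrite (leq_trans lt_mn le_nN).
  by apply: f_in; rewrite mdeg_mi_of_mnm.
have := f_ge (mnm_of_mi al); rewrite mcoeff_ps_trunc mdeg_mnm_of_mi ltr_nat lt_al.
by rewrite (leq_trans lt_al le_nN) mnm_of_miK => ->.
Qed.

Lemma valI_geP f c : valI_ge f c <-> forall al, (Defs.mdeg al)%:R < c -> f al = 0.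
Proof.
split=> [f_ge al lt_al | f_van n [_ not_in]]; last first.
  rewrite leNgt; apply/negP => lt_nc; apply: not_in => al lt_al; apply: f_van.
  by apply: le_lt_trans lt_nc; rewrite ler_nat -ltnS.
suff f_in n : (n <= Defs.mdeg al)%N -> inIpow n.+1 f by apply: f_in (leqnn _) _ _.
elim: n => [|n IHn] le_n.
  have [|not_in] := classic (inIpow 1 f) => //.
  have in0 : inIpow 0 f by [].
  have := f_ge 0%N (conj in0 not_in).
  by move=> c_le0; have := lt_le_trans lt_al c_le0; rewrite ltNge ler0n.
have [|not_in] := classic (inIpow n.+2 f) => //.
have := f_ge n.+1 (conj (IHn (ltnW le_n)) not_in).
by move=> c_le; have := lt_le_trans lt_al c_le; rewrite ltr_nat ltnS leqNgt le_n.
Qed.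

Lemma inIpow_pssubP N f g : inIpow N (pssub f g) <-> ps_trunc N f = ps_trunc N g %[modI N].
Proof. by rewrite (inIpow_ps_truncP _ (leqnn N)) ps_trunc_sub. Qed.

Lemma valI_ge_eqmodI N f y c : (forall n, n%:R < c -> (n < N)%N) ->
  ps_trunc N f = y %[modI N] -> mval_ge y c -> valI_ge f c.
Proof.
move=> ltN f_y y_ge; apply/valI_geP => al /[dup] lt_al /ltN lt_alN.
have := f_y (mnm_of_mi al); rewrite mdeg_mnm_of_mi ltr_nat => /(_ lt_alN).
by rewrite mcoeffB mcoeff_ps_trunc mdeg_mnm_of_mi lt_alN mnm_of_miK y_ge ?subr0 ?mdeg_mnm_of_mi.
Qed.

Lemma mval_ge_ps_trunc N f c : valI_ge f c -> mval_ge (ps_trunc N f) c.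
Proof.
move/valI_geP => f_van m lt_m; rewrite mcoeff_ps_trunc; case: ifP => // _.
by apply: f_van; rewrite mdeg_mi_of_mnm.
Qed.

Lemma ps_series_lim_trunc N (F : nat -> ps A l) S : ps_series_lim F S ->
  exists K0, forall K, (K0 <= K)%N -> ps_trunc N S = \sum_(k < K) ps_trunc N (F k) %[modI N].
Proof.
move=> /(_ N) [K0 S_lim]; exists K0 => K /S_lim /inIpow_pssubP.
by rewrite ps_trunc_sum.
Qed.

End Truncation.

(** * Minors of products of twisted incremental matrices *)

Fixpoint mxprod (R : pzRingType) n (Mx : nat -> 'M[R]_n) j : 'M[R]_n :=
  if j is j'.+1 then Mx j' *m mxprod Mx j' else 1%:M.

Section MinorBounds.
Variables (A : comNzRingType) (l p d k L : nat).
Hypotheses (p_gt0 : (0 < p)%N) (d_gt0 : (0 < d)%N).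
Local Notation R := {mpoly A[l]}.

Definition twisted_mx (X : 'M[R]_L) :=
  forall r c : 'I_L, mval_ge (X r c) (((r * p)%:R - c%:R) / d%:R).

Let wt (g : 'I_k -> 'I_L) := (\sum_i g i)%N.
Let z := (\sum_(i < k) i)%N.

(* [e] is the gain over the bound that twisted incrementality gives directly (see
   [minor_excess_twisted]). *)
Definition minor_excess (X : 'M[R]_L) (e : rat) :=
  forall r c : 'I_k -> 'I_L,
    mval_ge (\det (mxsub r c X)) (((wt r * p)%:R - (wt c)%:R + e) / d%:R).

Let sum_entry_bound (r c : 'I_k -> 'I_L) :
  \sum_i (((r i * p)%:R - (c i)%:R) / d%:R) = (((wt r * p)%:R - (wt c)%:R) / d%:R : rat).
Proof. by rewrite -mulr_suml sumrB -!natr_sum big_distrl. Qed.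

Let pR_ge1 : 1 <= p%:R :> rat. Proof. by rewrite ler1n. Qed.
Let dR_gt0 : 0 < d%:R :> rat. Proof. by rewrite ltr0n. Qed.

Lemma minor_excess_twisted X : twisted_mx X -> minor_excess X 0.
Proof.
move=> X_tw r c; rewrite addr0.
have := mval_ge_det (B := mxsub r c X) (row_wt := fun i => (r i * p)%:R / d%:R)
                    (col_wt := fun j => (c j)%:R / d%:R).
rewrite -!mulr_suml -!natr_sum big_distrl -mulrBl; apply => i j.
by rewrite mxE -mulrBl; apply: X_tw.
Qed.

Let mxsub_rowsub_colsub (g : 'I_k -> 'I_L) (c : 'I_k -> 'I_L) (X : 'M[R]_L) :
  mxsub g id (mxsub id c X) = mxsub g c X.
Proof. by apply/matrixP => i j; rewrite !mxE. Qed.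

(* The entries of [M] contribute [(wt r * p - wt g) / d], the minor of [X] the rest. *)
Let minor_mul_term M X e r c (g : 'I_k -> 'I_L) : twisted_mx M -> minor_excess X e ->
  mval_ge ((\prod_i mxsub r id M i (g i)) * \det (mxsub g id (mxsub id c X)))
          (((wt r * p)%:R - (wt c)%:R + e + (p%:R - 1) * (wt g)%:R) / d%:R).
Proof.
move=> M_tw X_ex; rewrite mxsub_rowsub_colsub.
under eq_bigr => i _ do rewrite mxE.
apply: mval_ge_le (mval_geM (mval_ge_prod (fun i _ => M_tw (r i) (g i))) (X_ex g c)) _.
rewrite sum_entry_bound -mulrDl ler_pM2r ?invr_gt0 // natrM.
by rewrite (natrM _ (wt g)); lra.
Qed.

Lemma minor_excess_mul M X e : twisted_mx M -> minor_excess X e ->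
  minor_excess (M *m X) (e + (p%:R - 1) * z%:R).
Proof.
move=> M_tw X_ex r c; rewrite mxsub_mul det_mulmx_rowsub; apply: mval_ge_sum => g _.
have [g_inj | g_ninj] := boolP (injectiveb g); last first.
  by rewrite det_rowsub_noninj ?mulr0 //; apply: mval_ge0.
apply: mval_ge_le (minor_mul_term M_tw X_ex) _.
have : (z <= wt g)%N.
  move/injectiveP: g_inj => g_inj.
  by apply: (@leq_sum_ord_inj _ (fun i => val (g i))) => i j /val_inj /g_inj.
rewrite -(ler_nat rat) ler_pM2r ?invr_gt0 // => le_z.
have : 0 <= (p%:R - 1) * ((wt g)%:R - z%:R) :> rat.
  by apply: mulr_ge0; rewrite subr_ge0.
lra.
Qed.

Lemma minor_excess_mxprod Mx j : (forall i, (i <= j)%N -> twisted_mx (Mx i)) ->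
  minor_excess (mxprod Mx j.+1) ((p%:R - 1) * j%:R * z%:R).
Proof.
elim: j => [|j IHj] Mx_tw.
  by rewrite /= mulmx1 mulr0 mul0r; apply: minor_excess_twisted; apply: Mx_tw.
have -> : (p%:R - 1) * j.+1%:R * z%:R = (p%:R - 1) * j%:R * z%:R + (p%:R - 1) * z%:R :> rat.
  by rewrite -natr1; ring.
by apply: minor_excess_mul; [apply: Mx_tw | apply: IHj => i /leqW; apply: Mx_tw].
Qed.

Lemma nonleading_minor_mxprod Mx j (m : 'I_k -> 'I_L) i0 :
  (forall i, (i <= j)%N -> twisted_mx (Mx i)) ->
  (forall i i' : 'I_k, (i < i')%N -> (m i < m i')%N) -> m i0 != i0 :> nat ->
  mval_ge (\det (mxsub m m (mxprod Mx j.+1))) ((p%:R - 1) * (j.+1 * z).+1%:R / d%:R).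
Proof.
move=> Mx_tw m_incr m_i0; have X_ex := minor_excess_mxprod Mx_tw.
apply: mval_ge_le (X_ex m m) _.
have : (z < wt m)%N by apply: (@ltn_sum_ord_incr _ (fun i => val (m i))) m_i0.
rewrite -(ler_nat rat) ler_pM2r ?invr_gt0 // -!natr1 !natrM => lt_z.
have : 0 <= (p%:R - 1) * ((wt m)%:R - z%:R - 1) :> rat.
  by apply: mulr_ge0; [rewrite subr_ge0 | lra].
lra.
Qed.

Section LeadingMinor.
Hypothesis k_le_L : (k <= L)%N.
Let Z := widen_ord k_le_L.

Let wt_Z : wt Z = z. Proof. by []. Qed.

Let leading_terms (M X : 'M[R]_L) :
  \sum_(g : {ffun 'I_k -> 'I_L} | [forall i, g i < k]%N)
      (\prod_i mxsub Z id M i (g i)) * \det (mxsub g id (mxsub id Z X))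
  = \det (mxsub Z Z M) * \det (mxsub Z Z X).
Proof.
rewrite -det_mulmx det_mulmx_rowsub.
pose shrink (g : {ffun 'I_k -> 'I_L}) : {ffun 'I_k -> 'I_k} := [ffun i => insubd i (g i : nat)].
rewrite (reindex (fun h : {ffun 'I_k -> 'I_k} => [ffun i => Z (h i)])) /=; last first.
  exists shrink => [h _ | g]; last rewrite inE => /forallP g_lt.
    by apply/ffunP => i; apply/val_inj; rewrite !ffunE val_insubd /= ltn_ord.
  by apply/ffunP => i; apply/val_inj; rewrite !ffunE /= val_insubd g_lt.
rewrite (eq_bigl xpredT) => [|h]; last by apply/forallP => i; rewrite ffunE /= ltn_ord.
apply: eq_bigr => h _; congr (_ * _).
  by apply: eq_bigr => i _; rewrite !mxE ffunE.
by congr (\det _); apply/matrixP => i j; rewrite !mxE ffunE.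
Qed.

Lemma leading_minor_mul M X e : twisted_mx M -> minor_excess X e ->
  mval_ge (\det (mxsub Z Z (M *m X)) - \det (mxsub Z Z M) * \det (mxsub Z Z X))
          ((e + (p%:R - 1) * (2 * z).+1%:R) / d%:R).
Proof.
move=> M_tw X_ex; rewrite mxsub_mul det_mulmx_rowsub.
rewrite (bigID [pred g : {ffun 'I_k -> 'I_L} | [forall i, g i < k]%N]) /= leading_terms.
rewrite addrAC subrr add0r; apply: mval_ge_sum => g /forallPn[i0]; rewrite -leqNgt => le_k_gi0.
have [g_inj | g_ninj] := boolP (injectiveb g); last first.
  by rewrite det_rowsub_noninj ?mulr0 //; apply: mval_ge0.
apply: mval_ge_le (minor_mul_term M_tw X_ex) _; rewrite wt_Z.
have : (z < wt g)%N.
  move/injectiveP: g_inj => g_inj.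
  by apply: (@ltn_sum_ord_inj _ (fun i => val (g i))) le_k_gi0 => i j /val_inj /g_inj.
rewrite -(ler_nat rat) ler_pM2r ?invr_gt0 // -!natr1 !natrM => lt_z.
have : 0 <= (p%:R - 1) * ((wt g)%:R - z%:R - 1) :> rat.
  by apply: mulr_ge0; [rewrite subr_ge0 | lra].
lra.
Qed.

Lemma leading_minor_mxprod Mx j : (forall i, (i <= j)%N -> twisted_mx (Mx i)) ->
  mval_ge (\det (mxsub Z Z (mxprod Mx j.+1)) - \prod_(i < j.+1) \det (mxsub Z Z (Mx i)))
          ((p%:R - 1) * (j.+1 * z).+1%:R / d%:R).
Proof.
elim: j => [|j IHj] Mx_tw; first by rewrite /= mulmx1 big_ord1 subrr; apply: mval_ge0.
rewrite [mxprod _ _]/= big_ord_recr /=.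
set X := mxprod Mx j.+1; set D := \det (mxsub Z Z (Mx j.+1)).
have -> : \det (mxsub Z Z (Mx j.+1 *m X)) - (\prod_(i < j.+1) \det (mxsub Z Z (Mx i))) * D =
    (\det (mxsub Z Z (Mx j.+1 *m X)) - D * \det (mxsub Z Z X))
    + D * (\det (mxsub Z Z X) - \prod_(i < j.+1) \det (mxsub Z Z (Mx i))) by ring.
have Mx_tw' i : (i <= j)%N -> twisted_mx (Mx i) by move/leqW; apply: Mx_tw.
apply: mval_geD.
  apply: mval_ge_le (leading_minor_mul (Mx_tw _ (leqnn _)) (minor_excess_mxprod Mx_tw')) _.
  by rewrite ler_pM2r ?invr_gt0 // -!natr1 !natrM; lra.
have D_ex := minor_excess_twisted (Mx_tw _ (leqnn _)).
have D_ge := D_ex Z Z; rewrite wt_Z addr0 in D_ge.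
apply: mval_ge_le (mval_geM D_ge (IHj Mx_tw')) _.
by rewrite -mulrDl ler_pM2r ?invr_gt0 // -!natr1 !natrM; lra.
Qed.

Variable K : nat.
Hypotheses (k_le_K : (k <= K)%N) (K_le_L : (K <= L)%N).

Lemma principal_minor_sum_mxprod Mx j : (forall i, (i <= j)%N -> twisted_mx (Mx i)) ->
  mval_ge (\sum_(m : {ffun 'I_k -> 'I_K} |
              [forall i : 'I_k, forall i' : 'I_k, (i < i')%N ==> (m i < m i')%N])
             \det (mxsub (fun i => widen_ord K_le_L (m i)) (fun i => widen_ord K_le_L (m i))
                          (mxprod Mx j.+1))
           - \prod_(i < j.+1) \det (mxsub Z Z (Mx i)))
          ((p%:R - 1) * (j.+1 * z).+1%:R / d%:R).
Proof.
move=> Mx_tw; pose ZK : {ffun 'I_k -> 'I_K} := [ffun i => widen_ord k_le_K i].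
have ZK_incr : [forall i : 'I_k, forall i' : 'I_k, (i < i')%N ==> (ZK i < ZK i')%N].
  by apply/forallP => i; apply/forallP => i'; rewrite !ffunE; apply/implyP.
rewrite (bigD1 ZK) //= addrAC; apply: mval_geD.
  rewrite (_ : mxsub _ _ _ = mxsub Z Z (mxprod Mx j.+1)); first exact: leading_minor_mxprod.
  have widenZ i : widen_ord K_le_L (widen_ord k_le_K i) = Z i by apply/val_inj.
  by apply/matrixP => i i'; rewrite !mxE !ffunE !widenZ.
apply: mval_ge_sum => m /andP[/forallP m_incr ne_mZK].
have [i0 m_i0] : exists i0, m i0 != i0 :> nat.
  apply/existsP; apply: contraNT ne_mZK; rewrite negb_exists => /forallP m_id.
  apply/eqP/ffunP => i; apply/val_inj/eqP; rewrite ffunE; exact: negbNE (m_id i).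
apply: (nonleading_minor_mxprod (m := fun i => widen_ord K_le_L (m i)) (i0 := i0)) => //.
by move=> i i' lt_ii'; have /forallP/(_ i')/implyP := m_incr i; apply.
Qed.
End LeadingMinor.
End MinorBounds.

(** * Truncated infinite products *)

Lemma eventually_forall_lt (P : nat -> nat -> Prop) :
  (forall i, exists b, forall x, (b <= x)%N -> P i x) ->
  forall K, exists b, forall x, (b <= x)%N -> forall i, (i < K)%N -> P i x.
Proof.
move=> P_ev; elim=> [|K [b1 IHK]]; first by exists 0%N.
have [b2 P_K] := P_ev K; exists (maxn b1 b2) => x; rewrite geq_max => /andP[le_b1 le_b2] i.
by rewrite ltnS leq_eqVlt => /orP[/eqP -> | lt_iK]; [apply: P_K | apply: IHK].
Qed.

Section TruncatedProduct.
Variables (A : comNzRingType) (l p d a N : nat) (M : nat -> infmx A l).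
Hypotheses (p_gt1 : (1 < p)%N) (d_gt0 : (0 < d)%N).
Hypothesis M_tw : forall j, (j < a)%N -> twisted_incremental p d (M j).
Local Notation R := {mpoly A[l]}.
Local Notation T j m n := (ps_trunc N (M j m n)).

Fixpoint tprod (L j m n : nat) : R :=
  if j is j'.+1 then \sum_(t < L) T j' m t * tprod L j' t n else (m == n)%:R.

Let T_bound j m n : (j < a)%N -> mval_ge (T j m n) (((m * p)%:R - n%:R) / d%:R).
Proof. by move=> lt_ja; apply: mval_ge_ps_trunc; apply: M_tw. Qed.

(* For [j = 0] the bound fails on the diagonal only. *)
Lemma tprod_bound L j t n : (j <= a)%N -> (0 < j)%N || (t != n) ->
  mval_ge (tprod L j t n) (((t * p)%:R - n%:R) / d%:R).
Proof.
elim: j t => [|j IHj] t le_ja; first by rewrite /= => /negbTE ->; apply: mval_ge0.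
move=> _; apply: mval_ge_sum => u _.
have [/IHj u_ge | ] := boolP ((0 < j)%N || (val u != n)).
  apply: mval_ge_le (mval_geM (T_bound (m := t) (n := u) le_ja) (u_ge (ltnW le_ja))) _.
  rewrite -mulrDl ler_pM2r ?invr_gt0 ?ltr0n //.
  have : (u%:R : rat) <= (u * p)%:R by rewrite ler_nat leq_pmulr // ltnW.
  lra.
rewrite negb_or negbK lt0n negbK => /andP[/eqP j0 /eqP u_n].
by rewrite j0 u_n /= eqxx mulr1; apply: T_bound; rewrite -j0.
Qed.

(* Beyond column [K + N d] the entries of the product lie in [I^N]: the tail term of index [t]
   has valuation at least [(t (p - 1) - n) / d]. *)
Let tail_term_bound L j m t n : (j < a)%N -> (n + N * d < t)%N ->
  mval_ge (T j m t * tprod L j t n) N%:R.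
Proof.
move=> lt_ja lt_t; have t_n : (0 < j)%N || (t != n).
  by rewrite orbC; apply/orP; left; apply: contraTneq lt_t => ->; rewrite -ltnNge ltnS leq_addr.
apply: mval_ge_le (mval_geM (T_bound (m := m) (n := t) lt_ja) (tprod_bound L (ltnW lt_ja) t_n)) _.
rewrite -mulrDl ler_pdivlMr ?ltr0n // -natrM.
have : ((t * 2)%:R : rat) <= (t * p)%:R by rewrite ler_nat leq_mul2l p_gt1 orbT.
have : ((n + N * d).+1%:R : rat) <= t%:R by rewrite ler_nat.
rewrite -!natr1 !natrD !natrM; have : (0 : rat) <= (m * p)%:R by [].
lra.
Qed.

Lemma tprod_approx j Q : (j <= a)%N -> infmx_prod_is j M Q ->
  forall K, exists L0, forall L, (L0 <= L)%N -> forall m n, (m < K)%N -> (n < K)%N ->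
    ps_trunc N (Q m n) = tprod L j m n %[modI N].
Proof.
elim: j Q => [|j IHj] Q le_ja Q_prod K.
  exists 0%N => L _ m n _ _; rewrite Q_prod /infmx1 /=.
  by case: eqP => _; [apply: ps_trunc_psone | rewrite ps_trunc0; apply: eqmodI_refl].
have [Q' [Q'_prod Q_mul]] := Q_prod.
have [B Q_lim] := eventually_forall_lt
  (P := fun m x => forall n, (n < K)%N ->
          ps_trunc N (Q m n) = \sum_(t < x) ps_trunc N (psmul (M j m t) (Q' t n)) %[modI N])
  (fun m => eventually_forall_lt (fun n => ps_series_lim_trunc N (Q_mul m n)) K) K.
pose T1 := maxn B (K + N * d).
have [L0 Q'_approx] := IHj Q' (ltnW le_ja) Q'_prod T1.
exists (maxn L0 T1) => L; rewrite geq_max => /andP[le_L0L le_T1L] m n lt_mK lt_nK.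
apply: eqmodI_trans (Q_lim T1 (leq_maxl _ _) m lt_mK n lt_nK) _.
rewrite /= -(big_mkord xpredT (fun t => T j m t * tprod L j t n)).
rewrite (big_cat_nat (leq0n T1) le_T1L) /= big_mkord -[X in X = _ %[modI N]]addr0.
apply: eqmodID.
  apply: eqmodI_sum => t _; apply: eqmodI_trans (ps_trunc_psmul _ _) (eqmodIM _ _).
    exact: eqmodI_refl.
  apply: Q'_approx => //; apply: leq_trans lt_nK _.
  by rewrite (leq_trans (leq_addr (N * d) K)) ?leq_maxr.
rewrite /eqmodI sub0r big_nat_cond; apply/mval_geN/mval_ge_sum => t /andP[/andP[le_T1t _] _].
apply: tail_term_bound => //; apply: leq_trans le_T1t; apply: leq_trans (leq_maxr _ _).
by rewrite ltn_add2r.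
Qed.

Definition tmx L j : 'M[R]_L := \matrix_(i, t) T j i t.

Lemma mxprod_tmx L j (i t : 'I_L) : mxprod (tmx L) j i t = tprod L j i t.
Proof.
elim: j i t => [|j IHj] i t /=; first by rewrite mxE.
by rewrite mxE; apply: eq_bigr => u _; rewrite IHj mxE.
Qed.

Lemma twisted_tmx L j : (j < a)%N -> twisted_mx p d (tmx L j).
Proof. by move=> lt_ja r c; rewrite mxE; apply: T_bound. Qed.

Lemma det_tmx_bound k j : (j < a)%N ->
  mval_ge (\det (tmx k j)) ((p%:R - 1) * (\sum_(i < k) i)%:R / d%:R).
Proof.
move=> lt_ja; have := minor_excess_twisted (k := k) (twisted_tmx (L := k) lt_ja).
move=> /(_ id id); rewrite mxsub_id => det_ge; apply: mval_ge_le det_ge _.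
by rewrite ler_pM2r ?invr_gt0 ?ltr0n // addr0 natrM; lra.
Qed.

End TruncatedProduct.

Section FredholmCoefficient.
Variables (A : comNzRingType) (l p d a N k : nat) (M : nat -> infmx A l).
Variables (P : infmx A l) (r : ps A l).
Hypotheses (p_gt1 : (1 < p)%N) (d_gt0 : (0 < d)%N) (a_gt0 : (0 < a)%N).
Hypothesis M_tw : forall j, (j < a)%N -> twisted_incremental p d (M j).
Hypotheses (P_prod : infmx_prod_is a M P) (r_coef : fredholm_coef_is P k r).

Lemma fredholm_coef_eqmodI :
  (forall n, (n < N)%N -> n%:R < (p%:R - 1) * (a * \sum_(i < k) i).+1%:R / d%:R :> rat) ->
  ps_trunc N r = \prod_(j < a) \det (tmx N M k j) %[modI N].
Proof.
move=> N_small; have [K0 r_lim] := r_coef N; pose K := maxn K0 k.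
have [L0 P_approx] := tprod_approx N p_gt1 d_gt0 M_tw (leqnn a) P_prod K.
pose L := maxn L0 K; have k_le_K : (k <= K)%N := leq_maxr _ _.
have K_le_L : (K <= L)%N := leq_maxr _ _; have k_le_L := leq_trans k_le_K K_le_L.
have r_sum : ps_trunc N r = \sum_(m : {ffun 'I_k -> 'I_K} |
    [forall i : 'I_k, forall i' : 'I_k, (i < i')%N ==> (m i < m i')%N])
  \det (mxsub (fun i => widen_ord K_le_L (m i)) (fun i => widen_ord K_le_L (m i))
              (mxprod (tmx N M L) a)) %[modI N].
  have /inIpow_pssubP := r_lim K (leq_maxl _ _).
  rewrite ps_trunc_sum => /eqmodI_trans; apply; apply: eqmodI_sum => m _.
  apply: eqmodI_trans (ps_trunc_psdet _) (eqmodI_det _) => i i'.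
  by rewrite !mxE mxprod_tmx; apply: P_approx; rewrite ?leq_maxl ?ltn_ord.
apply: eqmodI_trans r_sum _.
have -> : \prod_(j < a) \det (tmx N M k j) =
          \prod_(j < a) \det (mxsub (widen_ord k_le_L) (widen_ord k_le_L) (tmx N M L j)).
  by apply: eq_bigr => j _; congr (\det _); apply/matrixP => i i'; rewrite !mxE.
apply: mval_ge_nat N_small _; case: a a_gt0 M_tw => // a' _ M_tw'.
apply: (principal_minor_sum_mxprod (ltnW p_gt1) d_gt0 k_le_L k_le_K K_le_L (Mx := tmx N M L)).
by move=> j le_ja'; apply: (twisted_tmx N M_tw').
Qed.

End FredholmCoefficient.

Theorem mainTheorem11 (p d : nat) (A : comNzRingType) (l a : nat)
    (M : nat -> infmx A l) (P : infmx A l) (r : nat -> ps A l) :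
  prime p -> (0 < d)%N -> (1 <= a)%N ->
  (forall j, (j < a)%N -> twisted_incremental p d (M j)) ->
  infmx_prod_is a M P ->
  (forall k, fredholm_coef_is P k (r k)) ->
  forall k : nat,
    valI_ge (r k) ((a * k * k.-1 * p.-1)%N%:R / (2 * d)%N%:R) /\
    inIpow ((a * k * k.-1 * p.-1 + p.-1 + (2 * d).-1) %/ (2 * d))%N
      (pssub (r k) (\big[@psmul A l/@psone A l]_(j < a)
                      psdet (fun i i' : 'I_k => M j i i'))).
Proof.
move=> p_pr d_gt0 a_gt0 M_tw P_prod r_coef k; have p_gt1 := prime_gt1 p_pr.
have d2_gt0 : (0 < 2 * d)%N by rewrite muln_gt0.
set z := (\sum_(i < k) i)%N; set x := (a * k * k.-1 * p.-1)%N.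
have x_eq : x = (a * z * p.-1 * 2)%N by rewrite /x -(mulnA a) -sum_ord_double; lia.
have p1 : p%:R - 1 = p.-1%:R :> rat by rewrite -subn1 natrB // ltnW.
set N := ((x + p.-1 + (2 * d).-1) %/ (2 * d))%N.
have N_small n : (n < N)%N -> n%:R < (p%:R - 1) * (a * z).+1%:R / d%:R :> rat.
  by rewrite ltn_divceil // x_eq ltr_pdivlMr ?ltr0n // p1 -!natrM ltr_nat; nia.
have r_eq := fredholm_coef_eqmodI p_gt1 d_gt0 a_gt0 M_tw P_prod (r_coef k) N_small.
have prod_ge : mval_ge (\prod_(j < a) \det (tmx N M k j)) (x%:R / (2 * d)%N%:R).
  have det_ge j (_ : true) := det_tmx_bound (k := k) N d_gt0 M_tw (ltn_ord j).
  apply: mval_ge_le (mval_ge_prod det_ge) _.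
  rewrite sumr_const card_ord -mulr_natr x_eq le_eqVlt; apply/orP; left; apply/eqP.
  by rewrite !natrM -p1; field; rewrite pnatr_eq0 -lt0n.
split.
  apply: valI_ge_eqmodI r_eq prod_ge => n.
  rewrite ltn_divceil // ltr_pdivlMr ?ltr0n // -natrM ltr_nat => /leq_trans; apply.
  exact: leq_addr.
apply/inIpow_pssubP/(eqmodI_trans r_eq)/eqmodI_sym/(eqmodI_trans (ps_trunc_bigmul _)).
by apply: eqmodI_prod => j _; apply: ps_trunc_psdet.
Qed.
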